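(* Fix an integer $N\ge2$ and $n,m\in\{0,\dots,N-1\}$. There exists a rational function $\widehat R_{n,m}(X)\in\mathbb{Q}(X)$, independent of $p$, with no pole at $X=-1$ nor at any primitive $2p$-th root of unity for odd $p\ge 2N+1$, such that for every odd $p\ge2N+1$ and every primitive $2p$-th root of unity $A$, with $c=\frac{p-1}{2}-N$: (i) $R^{(c)}_{n,m}=\widehat R_{n,m}(A)$, where $$R^{(c)}_{n,m}=\frac{\{m\}!\,\{2c+2n+1\}!!\,\{2c+n+1\}^+!}{\{n\}!\,\{2c+2m+1\}!!\,\{2c+m+1\}^+!};$$ (ii) $\widehat R_{n,m}(-1)=\dfrac{(-4)^{n-m}\,m!\,(N-1-m)!}{n!\,(N-1-n)!}$.
   Context: For a primitive $2p$-th root of unity $A$ ($p$ odd) and an integer $k$: $\{k\}=(-A)^k-(-A)^{-k}$, $\{k\}^+=(-A)^k+(-A)^{-k}$; for $k\ge1$, $\{k\}!=\{1\}\cdots\{k\}$ and $\{k\}^+!=\{1\}^+\cdots\{k\}^+$, with $\{0\}!=\{0\}^+!=1$; $\{k\}!!=\{k\}\{k-2\}\{k-4\}\cdots$ (product of the positive terms of the same parity down to $1$ or $2$). The quantity $R^{(c)}_{n,m}$ is the ratio $((Q'_n,Q'_n))/((Q'_m,Q'_m))$ of Hopf-pairing norms of the basis vectors $Q'^{(c)}_n$ of the $SO(3)$-TQFT space of the one-holed torus, but the claim concerns only the displayed formula. *)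

From HB Require Import structures.
From mathcomp Require Import all_boot all_order all_algebra all_field.
Set Implicit Arguments. Unset Strict Implicit. Unset Printing Implicit Defensive.
Import Order.TTheory GRing.Theory Num.Theory.
Local Open Scope ring_scope.

Definition qbr (A : algC) (k : nat) : algC := (- A) ^+ k - (- A) ^- k.
Definition qbrp (A : algC) (k : nat) : algC := (- A) ^+ k + (- A) ^- k.
Definition qfact (A : algC) (k : nat) : algC := \prod_(1 <= i < k.+1) qbr A i.
Definition qfactp (A : algC) (k : nat) : algC := \prod_(1 <= i < k.+1) qbrp A i.
Definition qdfact (A : algC) (k : nat) : algC :=
  \prod_(1 <= i < k.+1 | odd i == odd k) qbr A i.

Definition cc (N p : nat) : nat := (p.-1./2 - N)%N.

Definition Rc (N n m p : nat) (A : algC) : algC :=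
  let c := cc N p in
  (qfact A m * qdfact A (2 * c + 2 * n + 1) * qfactp A (2 * c + n + 1)) /
  (qfact A n * qdfact A (2 * c + 2 * m + 1) * qfactp A (2 * c + m + 1)).

From HB Require Import structures.
From mathcomp Require Import all_boot all_order all_algebra all_field.
From mathcomp Require Import zify ring.
Import Order.TTheory GRing.Theory Num.Theory.
Set Implicit Arguments. Unset Strict Implicit.
Local Open Scope ring_scope.

(* Put s = 2c + 1 = p - 2N and x = -A, so that x^p = 1.  Peeling
   the last factors off the double and the plus factorials,
     {s + 2j}!! = {s}!! * prod_{k=1}^{j} {s + 2k}   and
     {s + j}^+! = {s}^+! * prod_{k=1}^{j} {s + k}^+,
   and the reflection k -> p - k ({p - k} = -{k}, {p - k}^+ = {k}^+) turns
   {s + 2k} into -{2N - 2k} and {s + k}^+ into {2N - k}^+.  The common factors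
   {s}!! and {s}^+! cancel, so R_{n,m} = F_n / F_m with
     F_j = prod_{k=1}^{j} -{2N - 2k} {2N - k}^+ / {k},
   an expression in which p no longer appears.  Writing {k} = (A^2 - 1) S_k(A) / x^k
   with S_k(X) = sum_{i<k} X^{2i} and {k}^+ = (A^{2k} + 1) / x^k, each factor is
   the value at A of an explicit rational function num_k / den_k over Q, whose
   value at X = -1 is -4 (N - k) / k. *)

Lemma qfactp_S A k : qfactp A k.+1 = qfactp A k * qbrp A k.+1.
Proof. by rewrite /qfactp big_nat_recr. Qed.

Lemma qdfact_SS A k : qdfact A k.+2 = qdfact A k * qbr A k.+2.
Proof.
rewrite /qdfact big_mkcond big_nat_recr // big_nat_recr //= eqxx negbK.
by rewrite [in RHS]big_mkcond /=; case: (odd k); rewrite mulr1.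
Qed.

Lemma qdfact_shift A s j :
  qdfact A (s + 2 * j) = qdfact A s * \prod_(1 <= k < j.+1) qbr A (s + 2 * k).
Proof.
elim: j => [|j IH]; first by rewrite big_geq // mulr1 muln0 addn0.
rewrite [in RHS]big_nat_recr //= (_ : s + 2 * j.+1 = (s + 2 * j).+2)%N; last by lia.
by rewrite qdfact_SS IH mulrA.
Qed.

Lemma qfactp_shift A s j :
  qfactp A (s + j) = qfactp A s * \prod_(1 <= k < j.+1) qbrp A (s + k).
Proof.
elim: j => [|j IH]; first by rewrite big_geq // mulr1 addn0.
by rewrite addnS qfactp_S IH [in RHS]big_nat_recr //= mulrA addnS.
Qed.

(* S_j(a) = 1 + a^2 + ... + a^(2(j-1)), the numerator of {j} up to (a^2 - 1). *)
Definition sqsum (R : pzSemiRingType) (a : R) (j : nat) : R :=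
  \sum_(i < j) a ^+ (2 * i).

Lemma sqsum_mul (R : comPzRingType) (a : R) j :
  (a ^+ 2 - 1) * sqsum a j = a ^+ (2 * j) - 1.
Proof.
rewrite /sqsum exprM [RHS]subrX1; congr (_ * _); apply: eq_bigr => i _.
by rewrite exprM.
Qed.

(* At a = -1 every term is 1, which produces the integers in part (ii). *)
Lemma sqsum_N1 (R : pzRingType) j : sqsum (-1 : R) j = j%:R.
Proof.
rewrite /sqsum (eq_bigr (fun=> 1)) ?sumr_const ?card_ord // => i _.
by rewrite exprM sqrrN !expr1n.
Qed.

Lemma sqr_negX (A : algC) j : (- A) ^+ j * (- A) ^+ j = A ^+ (2 * j).
Proof. by rewrite -exprD addnn -mul2n exprM sqrrN -exprM. Qed.

Lemma qbr_frac (A : algC) j : A != 0 -> qbr A j = (A ^+ 2 - 1) * sqsum A j / (- A) ^+ j.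
Proof.
move=> A0; have xj0 : (- A) ^+ j != 0 by rewrite expf_neq0 ?oppr_eq0.
by rewrite sqsum_mul -sqr_negX /qbr -[LHS](mulfK xj0) mulrBl mulVf.
Qed.

Lemma qbrp_frac (A : algC) j : A != 0 -> qbrp A j = (A ^+ (2 * j) + 1) / (- A) ^+ j.
Proof.
move=> A0; have xj0 : (- A) ^+ j != 0 by rewrite expf_neq0 ?oppr_eq0.
by rewrite -sqr_negX /qbrp -[LHS](mulfK xj0) mulrDl mulVf.
Qed.

Section Reflection.
Variables (A : algC) (p : nat).
Hypothesis negA_p : (- A) ^+ p = 1.

Lemma negA_exp_sub j : (j <= p)%N -> (- A) ^+ (p - j) = ((- A) ^+ j)^-1.
Proof. by move=> hj; apply/esym/mulr1_eq; rewrite -exprD subnKC. Qed.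

Lemma qbr_refl j : (j <= p)%N -> qbr A (p - j) = - qbr A j.
Proof. by move=> hj; rewrite /qbr negA_exp_sub // invrK opprB. Qed.

Lemma qbrp_refl j : (j <= p)%N -> qbrp A (p - j) = qbrp A j.
Proof. by move=> hj; rewrite /qbrp negA_exp_sub // invrK addrC. Qed.

End Reflection.

Section PrimitiveRoot.
Variables (p : nat) (A : algC).
Hypotheses (p_odd : odd p) (A_prim : (2 * p)%N.-primitive_root A).

Lemma p_gt0 : (0 < p)%N.
Proof. by case: p p_odd. Qed.

Lemma A_neq0 : A != 0.
Proof.
apply: contra_eq_neq (prim_expr_order A_prim) => ->.
by rewrite expr0n muln_eq0 /= eqn0Ngt p_gt0 eq_sym oner_eq0.
Qed.

(* A^p is a square root of 1 different from 1. *)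
Lemma A_exp_p : A ^+ p = -1.
Proof.
have : (A ^+ p - 1) * (A ^+ p + 1) = 0.
  by rewrite -subr_sqr -exprM mulnC (prim_expr_order A_prim) expr1n subrr.
have Ap1 : A ^+ p != 1.
  by rewrite -(prim_order_dvd A_prim) gtnNdvd ?p_gt0 //; have := p_gt0; lia.
by move/eqP; rewrite mulf_eq0 subr_eq0 (negbTE Ap1) addr_eq0 => /eqP.
Qed.

Lemma negA_exp_p : (- A) ^+ p = 1.
Proof. by rewrite exprNn -signr_odd p_odd A_exp_p mulrNN mulr1. Qed.

Lemma A_exp2_neq1 j : (0 < j < p)%N -> A ^+ (2 * j) != 1.
Proof.
move=> /andP [j0 jp]; rewrite -(prim_order_dvd A_prim) dvdn_pmul2l //.
by rewrite gtnNdvd.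
Qed.

(* A^(2j) = -1 is impossible: raising to the odd power p would give 1 = -1. *)
Lemma A_exp2_addr1_neq0 j : A ^+ (2 * j) + 1 != 0.
Proof.
rewrite addr_eq0; apply/eqP => h.
have : A ^+ (2 * j) ^+ p = 1 by rewrite -exprM mulnAC exprM (prim_expr_order A_prim) expr1n.
by rewrite h -signr_odd p_odd expr1 => /eqP; rewrite eq_sym -addr_eq0 (pnatr_eq0 _ 2).
Qed.

Lemma A_sqr_subr1_neq0 : (1 < p)%N -> A ^+ 2 - 1 != 0.
Proof. by move=> p1; rewrite subr_eq0 -[2%N]muln1 A_exp2_neq1 //; lia. Qed.

Lemma sqsum_neq0 j : (0 < j < p)%N -> sqsum A j != 0.
Proof.
move=> hj; apply: contra_neq (A_exp2_neq1 hj) => S0.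
by apply/eqP; rewrite -subr_eq0 -sqsum_mul S0 mulr0.
Qed.

Lemma qbr_neq0 j : (0 < j < p)%N -> qbr A j != 0.
Proof.
move=> hj; have A21 : A ^+ 2 - 1 != 0 by apply: A_sqr_subr1_neq0; lia.
by rewrite qbr_frac ?A_neq0 // !mulf_neq0 ?sqsum_neq0 ?invr_eq0 ?expf_neq0 ?oppr_eq0 ?A_neq0.
Qed.

Lemma qbrp_neq0 j : qbrp A j != 0.
Proof.
by rewrite qbrp_frac ?A_neq0 // mulf_neq0 ?A_exp2_addr1_neq0 ?invr_eq0 ?expf_neq0 ?oppr_eq0 ?A_neq0.
Qed.

End PrimitiveRoot.

Definition qfactor (N : nat) (A : algC) (k : nat) : algC :=
  - qbr A (2 * N - 2 * k) * qbrp A (2 * N - k) / qbr A k.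

Definition qratio (N : nat) (A : algC) (j : nat) : algC :=
  \prod_(1 <= k < j.+1) qfactor N A k.

Lemma qratio_split N A j : qratio N A j =
  (\prod_(1 <= k < j.+1) - qbr A (2 * N - 2 * k)) *
  (\prod_(1 <= k < j.+1) qbrp A (2 * N - k)) / qfact A j.
Proof. by rewrite /qratio /qfactor /qfact -prodfV -!big_split. Qed.

Lemma ratio_cancel (F : fieldType) (D E a b c d e f : F) : D != 0 -> E != 0 ->
  a * (D * b) * (E * c) / (d * (D * e) * (E * f)) = (b * c / d) / (e * f / a).
Proof.
move=> D0 E0; rewrite !invfM !invrK.
transitivity ((D / D) * (E / E) * (a * b * c / d / e / f)); first by ring.
by rewrite !divff // !mul1r; ring.
Qed.

Section RatioIdentity.
Variables (N p : nat) (A : algC).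
Hypotheses (p_odd : odd p) (A_prim : (2 * p)%N.-primitive_root A) (Np : (2 * N < p)%N).

(* s = 2c + 1, the common starting index of the factorials in R_{n,m}. *)
Let s := (p - 2 * N)%N.

Lemma qdfact_reflect j : (j < N)%N ->
  qdfact A (s + 2 * j) = qdfact A s * \prod_(1 <= k < j.+1) - qbr A (2 * N - 2 * k).
Proof.
move=> jN; rewrite qdfact_shift; congr (_ * _); apply: eq_big_nat => k hk.
by rewrite -(qbr_refl (negA_exp_p p_odd A_prim)) /s; [congr (qbr A _)|]; lia.
Qed.

Lemma qfactp_reflect j : (j < N)%N ->
  qfactp A (s + j) = qfactp A s * \prod_(1 <= k < j.+1) qbrp A (2 * N - k).
Proof.
move=> jN; rewrite qfactp_shift; congr (_ * _); apply: eq_big_nat => k hk.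
by rewrite -(qbrp_refl (negA_exp_p p_odd A_prim)) /s; [congr (qbrp A _)|]; lia.
Qed.

Lemma Rc_qratio n m : (n < N)%N -> (m < N)%N ->
  Rc N n m p A = qratio N A n / qratio N A m.
Proof.
move=> nN mN; have s_eq j : (2 * cc N p + j + 1 = s + j)%N by rewrite /cc /s; lia.
rewrite /Rc /= !s_eq qdfact_reflect // qdfact_reflect //.
rewrite qfactp_reflect // qfactp_reflect // !qratio_split ratio_cancel //.
- rewrite /qdfact prodf_seq_neq0; apply/allP => i; rewrite mem_index_iota => hi.
  by apply/implyP => _; apply: (qbr_neq0 p_odd A_prim); rewrite /s in hi; lia.
- rewrite /qfactp prodf_seq_neq0; apply/allP => i _.
  exact: qbrp_neq0 p_odd A_prim i.
Qed.

End RatioIdentity.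

Definition num_poly (N k : nat) : {poly rat} :=
  - (sqsum 'X (2 * N - 2 * k) * ('X^(2 * (2 * N - k)) + 1)).

Definition den_poly (N k : nat) : {poly rat} :=
  'X^(2 * (2 * N - 2 * k)) * sqsum 'X k.

Definition ratio_num (N j : nat) : {poly rat} := \prod_(1 <= k < j.+1) num_poly N k.

Definition ratio_den (N j : nat) : {poly rat} := \prod_(1 <= k < j.+1) den_poly N k.

Section Evaluation.
Variables (R : comNzRingType) (f : {rmorphism rat -> R}) (x : R).

Let comm_x : commr_rmorph f x := fun a => mulrC x (f a).
Local Notation ev := (horner_morph comm_x).

Lemma eval_sqsum j : (map_poly f (sqsum 'X j)).[x] = sqsum x j.
Proof.
rewrite -[LHS]/(ev _) rmorph_sum; apply: eq_bigr => i _.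
by rewrite rmorphXn /= horner_morphX.
Qed.

Lemma eval_num_poly N k : (map_poly f (num_poly N k)).[x] =
  - (sqsum x (2 * N - 2 * k) * (x ^+ (2 * (2 * N - k)) + 1)).
Proof.
rewrite -[LHS]/(ev _) rmorphN rmorphM rmorphD rmorph1 rmorphXn /=.
by rewrite horner_morphX [ev _]eval_sqsum.
Qed.

Lemma eval_den_poly N k : (map_poly f (den_poly N k)).[x] =
  x ^+ (2 * (2 * N - 2 * k)) * sqsum x k.
Proof. by rewrite -[LHS]/(ev _) rmorphM rmorphXn /= horner_morphX [ev _]eval_sqsum. Qed.

Lemma eval_ratio_num N j : (map_poly f (ratio_num N j)).[x] =
  \prod_(1 <= k < j.+1) (map_poly f (num_poly N k)).[x].
Proof. exact: (rmorph_prod ev). Qed.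

Lemma eval_ratio_den N j : (map_poly f (ratio_den N j)).[x] =
  \prod_(1 <= k < j.+1) (map_poly f (den_poly N k)).[x].
Proof. exact: (rmorph_prod ev). Qed.

End Evaluation.

Section EvaluationAtRoot.
Variables (N p : nat) (A : algC).
Hypotheses (p_odd : odd p) (A_prim : (2 * p)%N.-primitive_root A) (Np : (2 * N < p)%N).

Local Notation evA q := ((map_poly (ratr : rat -> algC) q).[A]).

(* Each factor of F_j is num_k(A) / den_k(A), using x^(2N-k) = x^k x^(2N-2k)
   and x^(2N-2k) x^(2N-2k) = A^(2(2N-2k)) for x = -A. *)
Lemma qfactor_eval k : (0 < k < N)%N ->
  qfactor N A k = evA (num_poly N k) / evA (den_poly N k).
Proof.
move=> hk; have A0 := A_neq0 p_odd A_prim.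
set a := (2 * N - 2 * k)%N; set l := (2 * N - k)%N.
have xl : (- A) ^+ l = (- A) ^+ k * (- A) ^+ a by rewrite -exprD; congr (_ ^+ _); lia.
have A21 : A ^+ 2 - 1 != 0 by apply: (A_sqr_subr1_neq0 A_prim); lia.
have Sk : sqsum A k != 0 by apply: (sqsum_neq0 A_prim); lia.
have xa0 : (- A) ^+ a != 0 by rewrite expf_neq0 ?oppr_eq0.
have xk0 : (- A) ^+ k != 0 by rewrite expf_neq0 ?oppr_eq0.
rewrite /qfactor eval_num_poly eval_den_poly !qbr_frac // qbrp_frac // xl -(sqr_negX A a).
by field; rewrite xa0 xk0 A21 Sk.
Qed.

Lemma qratio_eval j : (j < N)%N -> qratio N A j = evA (ratio_num N j) / evA (ratio_den N j).
Proof.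
move=> jN; rewrite eval_ratio_num eval_ratio_den -prodf_div; apply: eq_big_nat => k hk.
by apply: qfactor_eval; lia.
Qed.

Lemma ratio_num_neq0 j : (j < N)%N -> evA (ratio_num N j) != 0.
Proof.
move=> jN; rewrite eval_ratio_num prodf_seq_neq0; apply/allP => k; rewrite mem_index_iota => hk.
rewrite eval_num_poly oppr_eq0 mulf_neq0 ?(A_exp2_addr1_neq0 p_odd A_prim) //.
by apply: (sqsum_neq0 A_prim); lia.
Qed.

Lemma ratio_den_neq0 j : (j < N)%N -> evA (ratio_den N j) != 0.
Proof.
move=> jN; rewrite eval_ratio_den prodf_seq_neq0; apply/allP => k; rewrite mem_index_iota => hk.
rewrite eval_den_poly mulf_neq0 ?expf_neq0 ?(A_neq0 p_odd A_prim) //.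
by apply: (sqsum_neq0 A_prim); lia.
Qed.

End EvaluationAtRoot.

(* Evaluation over Q itself is the case f = id of the lemmas above. *)
Lemma horner_map_id (q : {poly rat}) (x : rat) : (map_poly idfun q).[x] = q.[x].
Proof. by rewrite map_poly_id. Qed.

Lemma num_poly_N1 N k : (num_poly N k).[-1] = -4 * (N - k)%:R.
Proof.
rewrite -horner_map_id eval_num_poly sqsum_N1 exprM sqrrN !expr1n.
by rewrite (_ : 2 * N - 2 * k = 2 * (N - k))%N ?natrM; [ring | lia].
Qed.

Lemma den_poly_N1 N k : (den_poly N k).[-1] = k%:R.
Proof. by rewrite -horner_map_id eval_den_poly sqsum_N1 exprM sqrrN !expr1n mul1r. Qed.

Lemma ratio_num_N1 N j : (ratio_num N j).[-1] = (-4) ^+ j * ((N - 1) ^_ j)%:R.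
Proof.
elim: j => [|j IH]; first by rewrite /ratio_num big_geq ?hornerC ?mulr1.
rewrite /ratio_num big_nat_recr //= hornerM -/(ratio_num N j) IH num_poly_N1.
by rewrite ffactnSr natrM exprS (_ : N - j.+1 = N - 1 - j)%N; [ring | lia].
Qed.

Lemma ratio_den_N1 N j : (ratio_den N j).[-1] = j`!%:R.
Proof.
elim: j => [|j IH]; first by rewrite /ratio_den big_geq ?hornerC.
by rewrite /ratio_den big_nat_recr //= hornerM -/(ratio_den N j) IH den_poly_N1 factS natrM mulrC.
Qed.

Lemma fact_natr_neq0 k : (k`!%:R : rat) != 0.
Proof. by rewrite pnatr_eq0 -lt0n fact_gt0. Qed.

Lemma ratio_value_N1 N n m : (n < N)%N -> (m < N)%N ->
  (ratio_num N n * ratio_den N m).[-1] / (ratio_den N n * ratio_num N m).[-1] =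
  (-4 : rat) ^ (n%:Z - m%:Z) * ((m`! * (N - 1 - m)`!)%N)%:R
    / ((n`! * (N - 1 - n)`!)%N)%:R.
Proof.
move=> nN mN; have ffact_ratio j : (j < N)%N ->
    ((N - 1) ^_ j)%:R = (N - 1)`!%:R / (N - 1 - j)`!%:R :> rat.
  by move=> jN; rewrite -(ffact_fact (_ : j <= N - 1)%N) ?natrM ?mulfK ?fact_natr_neq0 //; lia.
rewrite !hornerM !ratio_num_N1 !ratio_den_N1 !ffact_ratio // expfzDr // -exprnN -exprnP.
by rewrite !natrM; field; rewrite !fact_natr_neq0 !expf_neq0.
Qed.

Theorem lemma1 (N n m : nat) (hN : (2 <= N)%N) (hn : (n < N)%N) (hm : (m < N)%N) :
  exists P Q : {poly rat},
    Q.[-1] != 0 /\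
    (forall (p : nat) (A : algC), odd p -> (2 * N + 1 <= p)%N ->
        (2 * p)%N.-primitive_root A -> (map_poly ratr Q).[A] != 0) /\
    (forall (p : nat) (A : algC), odd p -> (2 * N + 1 <= p)%N ->
        (2 * p)%N.-primitive_root A ->
        Rc N n m p A = (map_poly ratr P).[A] / (map_poly ratr Q).[A]) /\
    P.[-1] / Q.[-1] =
      (-4 : rat) ^ (n%:Z - m%:Z) * ((m`! * (N - 1 - m)`!)%N)%:R
        / ((n`! * (N - 1 - n)`!)%N)%:R.
Proof.
exists (ratio_num N n * ratio_den N m), (ratio_den N n * ratio_num N m).
split; [|split; [|split]].
- rewrite hornerM ratio_den_N1 ratio_num_N1 !mulf_neq0 ?fact_natr_neq0 ?expf_neq0 //.
  by rewrite pnatr_eq0 -lt0n ffact_gt0; lia.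
- move=> p A hp hpN hA; have Np : (2 * N < p)%N by lia.
  by rewrite rmorphM hornerM mulf_neq0 ?(ratio_den_neq0 hp hA) ?(ratio_num_neq0 hp hA).
- move=> p A hp hpN hA; have Np : (2 * N < p)%N by lia.
  rewrite (Rc_qratio hp hA Np hn hm) !(qratio_eval hp hA Np) //.
  by rewrite !rmorphM !hornerM invf_div mulf_div.
- exact: ratio_value_N1.
Qed.
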